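(* Let $M$ be a monoid without a zero element, and let $M_0 = M \cup \{0_M\}$ be the monoid obtained by adjoining a zero $0_M$. Then $$\mathrm{Rec}(M_0) = \mathrm{Rec}(M) \cup \{ R \cup \{0_M\} \mid R \in \mathrm{Rec}(M)\}.$$
   Context: An element $z$ of a monoid $M$ is a zero if $zm = mz = z$ for all $m\in M$. Adjoining a zero to $M$ means forming $M\cup\{0_M\}$ with $0_M$ a new element, the multiplication of $M$ extended by $0_M m = m 0_M = 0_M 0_M = 0_M$. A subset $S$ of a monoid $M$ is recognizable if there exist a finite monoid $N$, a monoid morphism $\varphi\colon M \to N$ and a subset $T \subseteq N$ with $S = \varphi^{-1}(T)$; $\mathrm{Rec}(M)$ denotes the set of recognizable subsets of $M$. *)

From Stdlib Require Import List.

Record monoid := Monoid {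
  carrier :> Type;
  mop : carrier -> carrier -> carrier;
  mone : carrier;
  mopA : forall x y z, mop x (mop y z) = mop (mop x y) z;
  mop1l : forall x, mop mone x = x;
  mop1r : forall x, mop x mone = x
}.
Arguments mop {m}.
Arguments mone {m}.

Definition is_zero (M : monoid) (z : M) : Prop :=
  forall m : M, mop z m = z /\ mop m z = z.

Definition has_zero (M : monoid) : Prop := exists z : M, is_zero M z.

Definition monoid_morphism (M N : monoid) (f : M -> N) : Prop :=
  f mone = mone /\ forall x y : M, f (mop x y) = mop (f x) (f y).

Definition finite_monoid (N : monoid) : Prop :=
  exists l : list N, forall x : N, In x l.

Definition recognizable (M : monoid) (S : M -> Prop) : Prop :=
  exists (N : monoid) (f : M -> N) (T : N -> Prop),
    finite_monoid N /\ monoid_morphism M N f /\ (forall m : M, S m <-> T (f m)).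

(* Adjoining a zero: carrier option M, with None playing the role of 0_M. *)
Definition adj_op (M : monoid) (x y : option M) : option M :=
  match x, y with
  | Some a, Some b => Some (mop a b)
  | _, _ => None
  end.

Lemma adj_opA (M : monoid) (x y z : option M) :
  adj_op M x (adj_op M y z) = adj_op M (adj_op M x y) z.
Proof. destruct x, y, z; simpl; auto; rewrite mopA; reflexivity. Qed.

Lemma adj_op1l (M : monoid) (x : option M) : adj_op M (Some mone) x = x.
Proof. destruct x; simpl; auto; rewrite mop1l; reflexivity. Qed.

Lemma adj_op1r (M : monoid) (x : option M) : adj_op M x (Some mone) = x.
Proof. destruct x; simpl; auto; rewrite mop1r; reflexivity. Qed.

Definition adjoin_zero (M : monoid) : monoid :=
  Monoid (option M) (adj_op M) (Some mone) (adj_opA M) (adj_op1l M) (adj_op1r M).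

Definition zero0 (M : monoid) : adjoin_zero M := None.

(* A morphism f : M -> N onto a finite monoid extends to option_map f :
   M_0 -> N_0, which recognizes R and R together with 0_M at once, since
   0_N is the only preimage point of 0_M.  Conversely, the restriction of a
   recognizer of S to M recognizes the trace of S on M, and S is that trace
   plus or minus the single point 0_M. *)
From Stdlib Require Import List Classical.

Lemma recognizable_ext (M : monoid) (S S' : M -> Prop) :
  (forall m, S m <-> S' m) -> recognizable M S -> recognizable M S'.
Proof.
  intros HSS' [N [f [T [Hfin [Hf HS]]]]].
  exists N, f, T; split; [exact Hfin | split; [exact Hf |]].
  intros m; rewrite <- HSS'; apply HS.
Qed.

Lemma recognizable_preimage (M M' : monoid) (h : M -> M') (S : M' -> Prop) :
  monoid_morphism M M' h -> recognizable M' S ->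
  recognizable M (fun m => S (h m)).
Proof.
  intros [h1 hM] [N [f [T [Hfin [[f1 fM] HS]]]]].
  exists N, (fun m => f (h m)), T; split; [exact Hfin | split].
  - split; [rewrite h1; exact f1 |].
    intros x y; rewrite hM; apply fM.
  - intros m; apply HS.
Qed.

Lemma Some_morphism (M : monoid) :
  monoid_morphism M (adjoin_zero M) (@Some M).
Proof. split; reflexivity. Qed.

Lemma option_map_morphism (M N : monoid) (f : M -> N) :
  monoid_morphism M N f ->
  monoid_morphism (adjoin_zero M) (adjoin_zero N) (option_map f).
Proof.
  intros [f1 fM]; split.
  - simpl; rewrite f1; reflexivity.
  - intros [x|] [y|]; simpl; try reflexivity.
    rewrite fM; reflexivity.
Qed.

Lemma finite_adjoin_zero (N : monoid) :
  finite_monoid N -> finite_monoid (adjoin_zero N).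
Proof.
  intros [l Hl]; exists (None :: map Some l).
  intros [n|]; simpl; [right; apply in_map, Hl | left; reflexivity].
Qed.

Definition extend_zero (M : monoid) (R : M -> Prop) (b : Prop)
    (x : adjoin_zero M) : Prop :=
  match x with Some m => R m | None => b end.

Lemma extend_zeroE (M : monoid) (R : M -> Prop) (b : Prop) (x : adjoin_zero M) :
  extend_zero M R b x <-> (x = zero0 M /\ b) \/ exists m, x = Some m /\ R m.
Proof.
  destruct x as [m|]; simpl; split.
  - intros Hm; right; exists m; split; [reflexivity | exact Hm].
  - intros [[E _] | [m' [E Hm']]]; [discriminate | injection E as ->; exact Hm'].
  - intros Hb; left; split; [reflexivity | exact Hb].
  - intros [[_ Hb] | [m' [E _]]]; [exact Hb | discriminate].
Qed.

Lemma recognizable_extend_zero (M : monoid) (R : M -> Prop) (b : Prop) :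
  recognizable M R -> recognizable (adjoin_zero M) (extend_zero M R b).
Proof.
  intros [N [f [T [Hfin [Hf HR]]]]].
  exists (adjoin_zero N), (option_map f), (extend_zero N T b).
  split; [apply finite_adjoin_zero, Hfin | split; [apply option_map_morphism, Hf |]].
  intros [m|]; simpl; [apply HR | reflexivity].
Qed.

Lemma extend_zero_trace (M : monoid) (S : adjoin_zero M -> Prop) x :
  S x <-> extend_zero M (fun m => S (Some m)) (S (zero0 M)) x.
Proof. destruct x; reflexivity. Qed.

Theorem proposition4 (M : monoid) (hM : ~ has_zero M)
    (S : adjoin_zero M -> Prop) :
  recognizable (adjoin_zero M) S <->
  exists R : M -> Prop, recognizable M R /\
    ((forall x : adjoin_zero M, S x <-> exists m : M, x = Some m /\ R m) \/
     (forall x : adjoin_zero M,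
        S x <-> x = zero0 M \/ exists m : M, x = Some m /\ R m)).
Proof.
  split.
  - intros HS; exists (fun m => S (Some m)); split.
    { exact (recognizable_preimage _ _ _ _ (Some_morphism M) HS). }
    destruct (classic (S (zero0 M))) as [H0 | H0]; [right | left];
      intros x; rewrite extend_zero_trace, extend_zeroE; tauto.
  - intros [R [HR [HS | HS]]].
    + apply (recognizable_ext _ (extend_zero M R False)).
      { intros x; rewrite HS, extend_zeroE; tauto. }
      apply recognizable_extend_zero, HR.
    + apply (recognizable_ext _ (extend_zero M R True)).
      { intros x; rewrite HS, extend_zeroE; tauto. }
      apply recognizable_extend_zero, HR.
Qed.
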